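(* Let $\hat B_n^-(x)=\sum_{\sigma\in\mathcal B_n,\ \sigma(1)<0}x^{\hat d_B(\sigma)}$. Then $$\sum_{n\ge1}\hat B_n^-(x)\frac{z^n}{n!}=\frac{\cos(z(x-1))+\sin(z(x-1))-1}{(x-1)\cos(z(x-1))-(x+1)\sin(z(x-1))}.$$
   Context: $\mathcal B_n$ is the set of signed permutations (bijections $\sigma$ of $\{\pm1,\dots,\pm n\}$ with $\sigma(-i)=-\sigma(i)$), written as words $\sigma(1)\cdots\sigma(n)$ with $\sigma(0)=0$. $\hat d_B(\sigma)$ is the number of $i\in\{0\}\cup[n-1]$ such that either $\sigma(i)<\sigma(i+1)$ and $i$ is even, or $\sigma(i)>\sigma(i+1)$ and $i$ is odd. *)

From HB Require Import structures.
From mathcomp Require Import all_boot all_order all_algebra all_fingroup.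
Set Implicit Arguments. Unset Strict Implicit. Unset Printing Implicit Defensive.
Import Order.TTheory GRing.Theory Num.Theory.
Local Open Scope ring_scope.

(* A signed permutation of [n] is encoded by a permutation p of 'I_n and a
   sign vector s : sigma(i+1) = (if s i then -1 else 1) * (p i + 1).
   This is a bijection with B_n (the usual encoding). *)
Definition signed_perm (n : nat) : finType :=
  ('S_n * {ffun 'I_n -> bool})%type.

Definition sp_word (n : nat) (sg : signed_perm n) : seq int :=
  [seq (if sg.2 i then - ((sg.1 i).+1%:Z) else (sg.1 i).+1%:Z) | i <- enum 'I_n].

(* sigma(j) for j = 0..n, with sigma(0) = 0 *)
Definition sp_val (n : nat) (sg : signed_perm n) (j : nat) : int :=
  nth 0 (0 :: sp_word sg) j.

Definition dhatB (n : nat) (sg : signed_perm n) : nat :=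
  count (fun i => ((sp_val sg i < sp_val sg i.+1) && ~~ odd i)
                  || ((sp_val sg i.+1 < sp_val sg i) && odd i)) (iota 0 n).

Definition Bminus (n : nat) : {poly rat} :=
  \sum_(sg : signed_perm n | sp_val sg 1 < 0) 'X^(dhatB sg).

(* Formal power series in z over Q[x], given by their coefficient sequences *)
Definition fps_mul (a b : nat -> {poly rat}) (n : nat) : {poly rat} :=
  \sum_(i < n.+1) a i * b (n - i)%N.

Definition egfBminus (n : nat) : {poly rat} :=
  if n is 0 then 0 else (n`!%:R : rat)^-1 *: Bminus n.

(* cos(z(x-1)) and sin(z(x-1)) as formal power series in z *)
Definition cos_fps (n : nat) : {poly rat} :=
  if odd n then 0 else ((-1) ^+ n./2 / n`!%:R : rat) *: ('X - 1) ^+ n.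
Definition sin_fps (n : nat) : {poly rat} :=
  if odd n then ((-1) ^+ n./2 / n`!%:R : rat) *: ('X - 1) ^+ n else 0.

Definition num_fps (n : nat) : {poly rat} :=
  cos_fps n + sin_fps n - (n == 0%N)%:R.
Definition den_fps (n : nat) : {poly rat} :=
  ('X - 1) * cos_fps n - ('X + 1) * sin_fps n.

From mathcomp Require Import all_boot all_order all_algebra all_fingroup.
From mathcomp Require Import ring zify.
Set Implicit Arguments. Unset Strict Implicit. Unset Printing Implicit Defensive.
Import Order.TTheory GRing.Theory Num.Theory.
Local Open Scope ring_scope.

(* Work in Q[x][[z]] with D = ∂_z − (x²+1)(z∂_z − (x−1)∂_x).  D is a
   derivation, and a series f with f(0) = 0 and D f = p f vanishes, because D
   determines the coefficient of z^(n+1) from that of z^n.  With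
   c = cos(z(x−1)) and s = sin(z(x−1)) one has D c = −(x−1) s and
   D s = (x−1) c, hence D den = x(x−1) den.

   Negating every other letter of 0 σ(1) … σ(n) turns d̂_B into the number of
   adjacent pairs with negative sum.  Building these words by inserting ±n at
   every position gives recurrences saying that the EGF Φ of all signed
   permutations satisfies D Φ = (1+2x−x²) Φ + (x−1)², and the EGF A of those
   with σ(1) < 0 satisfies D A = Φ − x(x−1) A.  By uniqueness,
   Φ den = (x−1)(c − s) and then A den = num. *)

Section FpsProduct.

Implicit Types (f g h : nat -> {poly rat}) (p : {poly rat}).

Definition fps1 (n : nat) : {poly rat} := (n == 0)%:R.

Lemma eq_fps_mul f f' g g' n : f =1 f' -> g =1 g' -> fps_mul f g n = fps_mul f' g' n.
Proof. by move=> ef eg; apply: eq_bigr => i _; rewrite ef eg. Qed.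

Lemma fps_mul0 f g : fps_mul f g 0 = f 0%N * g 0%N.
Proof. by rewrite /fps_mul big_ord1. Qed.

Lemma fps_mul1l g n : fps_mul fps1 g n = g n.
Proof.
rewrite /fps_mul big_ord_recl /= mul1r subn0 big1 ?addr0 // => i _.
by rewrite mul0r.
Qed.

Lemma fps_mulDl f g h n :
  fps_mul (fun i => f i + g i) h n = fps_mul f h n + fps_mul g h n.
Proof. by rewrite /fps_mul -big_split; apply: eq_bigr => i _; rewrite mulrDl. Qed.

Lemma fps_mulBl f g h n :
  fps_mul (fun i => f i - g i) h n = fps_mul f h n - fps_mul g h n.
Proof. by rewrite /fps_mul -sumrB; apply: eq_bigr => i _; rewrite mulrBl. Qed.

Lemma fps_mulBr f g h n :
  fps_mul f (fun i => g i - h i) n = fps_mul f g n - fps_mul f h n.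
Proof. by rewrite /fps_mul -sumrB; apply: eq_bigr => i _; rewrite mulrBr. Qed.

Lemma fps_mulMl p f g n : fps_mul (fun i => p * f i) g n = p * fps_mul f g n.
Proof. by rewrite /fps_mul mulr_sumr; apply: eq_bigr => i _; rewrite mulrA. Qed.

Lemma fps_mulMr p f g n : fps_mul f (fun i => p * g i) n = p * fps_mul f g n.
Proof. by rewrite /fps_mul mulr_sumr; apply: eq_bigr => i _; rewrite mulrCA. Qed.

Lemma fps_mul_shift f g n :
  n.+1%:R * fps_mul f g n.+1 =
  fps_mul (fun i => i.+1%:R * f i.+1) g n + fps_mul f (fun i => i.+1%:R * g i.+1) n.
Proof.
have split_sum : n.+1%:R * fps_mul f g n.+1 =
    \sum_(i < n.+2) i%:R * f i * g (n.+1 - i)%N +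
    \sum_(i < n.+2) f i * ((n.+1 - i)%N%:R * g (n.+1 - i)%N).
  rewrite /fps_mul mulr_sumr -big_split; apply: eq_bigr => i _.
  have /subnKC hi : (i <= n.+1)%N by rewrite -ltnS.
  by rewrite -{1}hi natrD /=; ring.
rewrite split_sum [X in X + _]big_ord_recl [X in _ + X]big_ord_recr /=.
rewrite subnn !mul0r mulr0 add0r addr0.
congr (_ + _); apply: eq_bigr => i _ //.
by rewrite subSn // -ltnS.
Qed.

Lemma fps_mul_euler f g n :
  n%:R * fps_mul f g n =
  fps_mul (fun i => i%:R * f i) g n + fps_mul f (fun i => i%:R * g i) n.
Proof.
rewrite /fps_mul mulr_sumr -big_split; apply: eq_bigr => i _ /=.
have /subnKC hi : (i <= n)%N by rewrite -ltnS.
by rewrite -{1}hi natrD; ring.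
Qed.

Lemma fps_mul_deriv f g n :
  (fps_mul f g n)^`() =
  fps_mul (fun i => (f i)^`()) g n + fps_mul f (fun i => (g i)^`()) n.
Proof. by rewrite /fps_mul raddf_sum -big_split; apply: eq_bigr => i _ /=; rewrite derivM. Qed.

End FpsProduct.

Section FpsDerivation.

Variables q t : {poly rat}.
Implicit Types (f g : nat -> {poly rat}) (p : {poly rat}).

(* The operator ∂_z − q (z ∂_z − t ∂_x) on coefficient sequences in z. *)
Definition fps_der f (n : nat) : {poly rat} :=
  n.+1%:R * f n.+1 - q * (n%:R * f n - t * (f n)^`()).

Lemma eq_fps_der f g : f =1 g -> fps_der f =1 fps_der g.
Proof. by move=> efg n; rewrite /fps_der !efg. Qed.

Lemma fps_derD f g n : fps_der (fun i => f i + g i) n = fps_der f n + fps_der g n.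
Proof. rewrite /fps_der derivD; ring. Qed.

Lemma fps_derB f g n : fps_der (fun i => f i - g i) n = fps_der f n - fps_der g n.
Proof. rewrite /fps_der derivB; ring. Qed.

Lemma fps_derMl p f n :
  fps_der (fun i => p * f i) n = p * fps_der f n + q * t * p^`() * f n.
Proof. rewrite /fps_der derivM; ring. Qed.

Lemma fps_der1 n : fps_der fps1 n = 0.
Proof.
rewrite /fps_der /fps1 -!polyC_natr derivC.
by case: n => [|n]; rewrite /= ?mul0r; ring.
Qed.

Lemma fps_der_mul f g n :
  fps_der (fps_mul f g) n = fps_mul (fps_der f) g n + fps_mul f (fps_der g) n.
Proof.
rewrite /fps_der fps_mul_shift fps_mul_euler fps_mul_deriv.
rewrite !(fps_mulBl, fps_mulBr, fps_mulMl, fps_mulMr); ring.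
Qed.

Lemma fps_der_eq0 p f :
  f 0%N = 0 -> (forall n, fps_der f n = p * f n) -> forall n, f n = 0.
Proof.
move=> f0 Df; elim=> // n IHn.
move: (Df n); rewrite /fps_der IHn deriv0 !(mulr0, subr0) => /eqP.
by rewrite mulf_eq0 -polyC_natr polyC_eq0 pnatr_eq0 => /eqP.
Qed.

End FpsDerivation.

Section Trigonometric.

Local Notation t := ('X - 1 : {poly rat}).

Lemma scale_expS (a : rat) n :
  (n.+1%:R * (a / (n.+1)`!%:R)) *: t ^+ n.+1 = ((a / n`!%:R) *: t ^+ n) * t.
Proof.
rewrite -scalerAl -exprSr; congr (_ *: _).
rewrite factS natrM; field.
by rewrite nat1r !pnatr_eq0 -lt0n fact_gt0.
Qed.

Lemma scale_exp_euler (a : rat) n :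
  n%:R * (a *: t ^+ n) = t * (a *: t ^+ n)^`().
Proof.
rewrite derivZ deriv_exp derivB derivX -polyC1 derivC subr0 mul1r.
case: n => [|n]; first by rewrite !mulr0n scaler0 mulr0 mul0r.
by rewrite /= mulr_natl scalerMnr -scalerAr mulrnAr -exprS.
Qed.

Lemma cos_fpsS n : n.+1%:R * cos_fps n.+1 = - t * sin_fps n.
Proof.
rewrite /cos_fps /sin_fps /=; case: (boolP (odd n)) => /= odd_n; last by rewrite mulr0 mulr0.
rewrite mulr_natl scalerMnl -mulr_natl scale_expS.
by rewrite uphalf_half odd_n add1n exprS mulN1r mulNr scaleNr !mulNr mulrC.
Qed.

Lemma sin_fpsS n : n.+1%:R * sin_fps n.+1 = t * cos_fps n.
Proof.
rewrite /cos_fps /sin_fps /=; case: (boolP (odd n)) => /= odd_n; first by rewrite !mulr0.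
rewrite mulr_natl scalerMnl -mulr_natl scale_expS.
by rewrite uphalf_half (negbTE odd_n) add0n mulrC.
Qed.

Lemma cos_fps_euler n : n%:R * cos_fps n = t * (cos_fps n)^`().
Proof. by rewrite /cos_fps; case: (odd n); [rewrite deriv0 !mulr0 | exact: scale_exp_euler]. Qed.

Lemma sin_fps_euler n : n%:R * sin_fps n = t * (sin_fps n)^`().
Proof. by rewrite /sin_fps; case: (odd n); [exact: scale_exp_euler | rewrite deriv0 !mulr0]. Qed.

Lemma fps_der_cos q n : fps_der q t cos_fps n = - t * sin_fps n.
Proof. by rewrite /fps_der cos_fpsS cos_fps_euler subrr mulr0 subr0. Qed.

Lemma fps_der_sin q n : fps_der q t sin_fps n = t * cos_fps n.
Proof. by rewrite /fps_der sin_fpsS sin_fps_euler subrr mulr0 subr0. Qed.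

Lemma cos_fps0 : cos_fps 0 = 1.
Proof. by rewrite /cos_fps /= expr0 fact0 divr1 scale1r. Qed.

Lemma sin_fps0 : sin_fps 0 = 0.
Proof. by []. Qed.

End Trigonometric.

Section Ode.

Local Notation t := ('X - 1 : {poly rat}).
Local Notation q := ('X ^+ 2 + 1 : {poly rat}).
Local Notation D := (fps_der q t).

Definition xm1_cos_sub_sin (n : nat) : {poly rat} := t * (cos_fps n - sin_fps n).

Lemma fps_der_den n : D den_fps n = 'X * t * den_fps n.
Proof.
rewrite (@eq_fps_der _ _ _ (fun i => t * cos_fps i - ('X + 1) * sin_fps i)) //.
rewrite fps_derB !fps_derMl fps_der_cos fps_der_sin /den_fps.
rewrite derivB derivD derivX -polyC1 derivC subr0 addr0; ring.
Qed.

Lemma fps_der_num n : D num_fps n = xm1_cos_sub_sin n.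
Proof.
rewrite (@eq_fps_der _ _ _ (fun i => cos_fps i + sin_fps i - fps1 i)) //.
by rewrite fps_derB fps_derD fps_der_cos fps_der_sin fps_der1 /xm1_cos_sub_sin; ring.
Qed.

Lemma fps_der_xm1_cos_sub_sin n :
  D xm1_cos_sub_sin n = ('X + 1) * xm1_cos_sub_sin n + t ^+ 2 * den_fps n.
Proof.
rewrite fps_derMl fps_derB fps_der_cos fps_der_sin /den_fps /xm1_cos_sub_sin.
rewrite derivB derivX -polyC1 derivC subr0; ring.
Qed.

Lemma den_fps0 : den_fps 0 = t.
Proof. by rewrite /den_fps cos_fps0 sin_fps0 mulr1 mulr0 subr0. Qed.

Lemma mul_den_of_fps_der Phi :
  Phi 0%N = 1 ->
  (forall n, D Phi n = (1 + 2%:R * 'X - 'X ^+ 2) * Phi n + t ^+ 2 * fps1 n) ->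
  forall n, fps_mul Phi den_fps n = xm1_cos_sub_sin n.
Proof.
move=> Phi0 DPhi n; apply/subr0_eq; move: n.
apply: (@fps_der_eq0 q t ('X + 1)) => [|n].
  by rewrite fps_mul0 Phi0 den_fps0 /xm1_cos_sub_sin cos_fps0 sin_fps0 subr0 mulr1 mul1r subrr.
rewrite fps_derB fps_der_mul fps_der_xm1_cos_sub_sin.
rewrite (eq_fps_mul n DPhi (frefl _)) (eq_fps_mul n (frefl _) fps_der_den).
by rewrite fps_mulDl !(fps_mulMl, fps_mulMr) fps_mul1l; ring.
Qed.

Lemma mul_den_of_fps_der_num A Phi :
  A 0%N = 0 -> (forall n, fps_mul Phi den_fps n = xm1_cos_sub_sin n) ->
  (forall n, D A n = Phi n - 'X * t * A n) ->
  forall n, fps_mul A den_fps n = num_fps n.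
Proof.
move=> A0 Phi_den DA n; apply/subr0_eq; move: n.
apply: (@fps_der_eq0 q t 0) => [|n].
  by rewrite fps_mul0 A0 mul0r /num_fps cos_fps0 sin_fps0 addr0 subrr subrr.
rewrite fps_derB fps_der_mul fps_der_num.
rewrite (eq_fps_mul n DA (frefl _)) (eq_fps_mul n (frefl _) fps_der_den).
by rewrite fps_mulBl !(fps_mulMl, fps_mulMr) Phi_den; ring.
Qed.

End Ode.

Section InsertionWords.

Local Notation q := ('X ^+ 2 + 1 : {poly rat}).

Fixpoint neg_pairs_from (c : int) (w : seq int) : nat :=
  if w is d :: w' then ((c + d < 0)%R + neg_pairs_from d w')%N else 0%N.

Definition neg_pairs (v : seq int) : nat :=
  if v is b :: v' then neg_pairs_from b v' else 0%N.

Definition insert (T : Type) (w : seq T) (k : nat) (e : T) : seq T :=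
  take k w ++ e :: drop k w.

Definition bounded (m : nat) (w : seq int) : bool :=
  all (fun a : int => (- Posz m < a) && (a < Posz m)) w.

Lemma perm_insert (T : eqType) (w : seq T) k e : perm_eq (insert w k e) (e :: w).
Proof. by rewrite /insert -cat1s perm_catCA /= perm_cons cat_take_drop. Qed.

Lemma expX_bool (s : nat) (e : bool) :
  'X^(e + s) = (if e then 'X else 1) * 'X^s :> {poly rat}.
Proof. by case: e; rewrite ?add1n ?exprS ?add0n ?mul1r. Qed.

(* Between [a] and [b], [+m] replaces the pair [(a, b)] by two positive pairs and
   [-m] by two negative ones; at the end, [+m] or [-m] adds one pair of its sign. *)
Lemma sum_insert_behead m (a : int) w : bounded m (a :: w) ->
  \sum_(0 <= k < (size w).+1)
     ('X^(neg_pairs (insert (a :: w) k.+1 (Posz m))) +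
      'X^(neg_pairs (insert (a :: w) k.+1 (- Posz m))))
  = (1 + 'X) * 'X^(neg_pairs (a :: w)) +
    q * ((1 - 'X) * ('X^(neg_pairs (a :: w)))^`() +
         (size w)%:R * 'X^(neg_pairs (a :: w))).
Proof.
elim: w a => [|b w IHw] a /=.
  rewrite andbT => /andP [am ma].
  rewrite big_nat1 /insert /= !addn0.
  have -> : (a + Posz m < 0) = false by apply/negbTE; rewrite -leNgt; lia.
  have -> : (a + - Posz m < 0) = true by lia.
  by rewrite expr0 -polyC1 derivC /=; ring.
move=> /andP [abound wbound]; have /andP [bbound _] := wbound.
rewrite big_nat_recl //.
rewrite (@eq_big_nat _ _ _ 0 (size w).+1 _ (fun k => 'X^((a + b < 0)%R : nat) *
    ('X^(neg_pairs (insert (b :: w) k.+1 (Posz m))) +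
     'X^(neg_pairs (insert (b :: w) k.+1 (- Posz m)))))); last first.
  by move=> k _ /=; rewrite !exprD mulrDr.
rewrite -mulr_sumr IHw // /insert /=.
have -> : (a + Posz m < 0) = false by apply/negbTE; rewrite -leNgt; lia.
have -> : (Posz m + b < 0) = false by apply/negbTE; rewrite -leNgt; lia.
have -> : (a + - Posz m < 0) = true by lia.
have -> : (- Posz m + b < 0) = true by lia.
rewrite !add0n !add1n expX_bool.
by case: (a + b < 0)%R; rewrite /= ?expr1 ?mul1r ?derivM ?derivX -?natr1 !exprS; ring.
Qed.

Lemma sum_insert m (a : int) w : bounded m (a :: w) ->
  \sum_(0 <= k < (size w).+2)
     ('X^(neg_pairs (insert (a :: w) k (Posz m))) +
      'X^(neg_pairs (insert (a :: w) k (- Posz m))))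
  = 2%:R * (1 + 'X) * 'X^(neg_pairs (a :: w)) +
    q * ((1 - 'X) * ('X^(neg_pairs (a :: w)))^`() +
         (size w)%:R * 'X^(neg_pairs (a :: w))).
Proof.
move=> awbound; have /andP [abound _] := awbound.
rewrite big_nat_recl // sum_insert_behead // /insert /=.
have -> : (Posz m + a < 0) = false by apply/negbTE; rewrite -leNgt; lia.
have -> : (- Posz m + a < 0) = true by lia.
by rewrite add0n add1n exprS; ring.
Qed.

Definition pos_weight (v : seq int) : {poly rat} :=
  if 0 < head 0 v then 'X^(neg_pairs v) else 0.

Lemma sum_insert_pos m (a : int) w : bounded m (a :: w) -> (0 < m)%N ->
  \sum_(0 <= k < (size w).+2)
     (pos_weight (insert (a :: w) k (Posz m)) +
      pos_weight (insert (a :: w) k (- Posz m)))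
  = 'X^(neg_pairs (a :: w)) +
    ((1 + 'X) * pos_weight (a :: w) +
     q * ((1 - 'X) * (pos_weight (a :: w))^`() + (size w)%:R * pos_weight (a :: w))).
Proof.
move=> awbound m_gt0; have /andP [abound _] := awbound.
rewrite big_nat_recl //.
have -> : pos_weight (insert (a :: w) 0 (Posz m)) = 'X^(neg_pairs (a :: w)).
  rewrite /pos_weight /insert /=.
  have -> : (0 < Posz m) = true by lia.
  have -> : (Posz m + a < 0) = false by apply/negbTE; rewrite -leNgt; lia.
  by rewrite add0n.
have -> : pos_weight (insert (a :: w) 0 (- Posz m)) = 0.
  by rewrite /pos_weight /insert /=; have -> : (0 < - Posz m) = false by lia.
rewrite addr0; congr (_ + _).
rewrite /pos_weight /=; case: (0 < a) => /=; first exact: sum_insert_behead.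
by rewrite big1 ?deriv0 => [|k _]; [ring | exact: addr0].
Qed.

Definition insert_choices (n : nat) : seq (nat * int) :=
  [seq (k, e) | k <- iota 0 n.+1, e <- [:: Posz n.+1; - Posz n.+1]].

(* The words whose absolute values are a permutation of 1..n, obtained by
   inserting +n or -n anywhere in the words for n - 1. *)
Fixpoint swords (n : nat) : seq (seq int) :=
  if n is m.+1 then [seq insert w ke.1 ke.2 | w <- swords m, ke <- insert_choices m]
  else [:: [::]].

Lemma swordsS n :
  swords n.+1 = [seq insert w ke.1 ke.2 | w <- swords n, ke <- insert_choices n].
Proof. by []. Qed.

Definition swords_gf (n : nat) : {poly rat} := \sum_(v <- swords n) 'X^(neg_pairs v).

Definition swords_pos_gf (n : nat) : {poly rat} := \sum_(v <- swords n) pos_weight v.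

Lemma big_swordsS (F : seq int -> {poly rat}) n :
  \sum_(v <- swords n.+1) F v =
  \sum_(w <- swords n) \sum_(0 <= k < n.+1)
     (F (insert w k (Posz n.+1)) + F (insert w k (- Posz n.+1))).
Proof.
rewrite swordsS big_allpairs_dep; apply: eq_bigr => w _.
rewrite big_allpairs_dep; apply: eq_bigr => k _.
by rewrite !big_cons big_nil /= addr0.
Qed.

Lemma swords_bounded n v : v \in swords n -> size v = n /\ bounded n.+1 v.
Proof.
elim: n v => [|n IHn] v; first by rewrite inE => /eqP ->.
rewrite swordsS; case/allpairsP => [[w [k e]] /= [w_in ke_in ->]].
have [size_w w_bounded] := IHn w w_in.
have e_max : (e == Posz n.+1) || (e == - Posz n.+1).
  by case/allpairsP: ke_in => [[k' e'] /= [_ e'_in [_ ->]]]; rewrite !inE in e'_in.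
split; first by rewrite (perm_size (perm_insert w k e)) /= size_w.
rewrite /bounded (perm_all _ (perm_insert w k e)) /=; apply/andP; split.
  by case/orP: e_max => /eqP ->; lia.
by apply/allP => a /(allP w_bounded); lia.
Qed.

Lemma big_deriv_comb (I : Type) (r : seq I) (F : I -> {poly rat}) (a b c : {poly rat}) :
  \sum_(i <- r) (a * F i + b * ((1 - 'X) * (F i)^`() + c * F i)) =
  a * \sum_(i <- r) F i +
  b * ((1 - 'X) * (\sum_(i <- r) F i)^`() + c * \sum_(i <- r) F i).
Proof.
elim: r => [|i r IHr]; first by rewrite !big_nil deriv0; ring.
by rewrite !big_cons derivD IHr; ring.
Qed.

Lemma swords_gfSS n :
  swords_gf n.+2 = 2%:R * (1 + 'X) * swords_gf n.+1 +
                   q * ((1 - 'X) * (swords_gf n.+1)^`() + n%:R * swords_gf n.+1).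
Proof.
rewrite /swords_gf big_swordsS -big_deriv_comb; apply: eq_big_seq => w w_in.
have [] := swords_bounded w_in; case: w {w_in} => [//|a w] [<-].
exact: sum_insert.
Qed.

Lemma swords_pos_gfSS n :
  swords_pos_gf n.+2 = swords_gf n.+1 +
    ((1 + 'X) * swords_pos_gf n.+1 +
     q * ((1 - 'X) * (swords_pos_gf n.+1)^`() + n%:R * swords_pos_gf n.+1)).
Proof.
rewrite /swords_pos_gf /swords_gf big_swordsS -big_deriv_comb -big_split.
apply: eq_big_seq => w w_in.
have [] := swords_bounded w_in; case: w {w_in} => [//|a w] [<-].
by move=> awbound; apply: sum_insert_pos.
Qed.

Lemma swords_gf0 : swords_gf 0 = 1.
Proof. by rewrite /swords_gf big_seq1. Qed.

Lemma swords_gf1 : swords_gf 1 = 2%:R.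
Proof. by rewrite /swords_gf big_swordsS big_seq1 big_nat1. Qed.

Lemma swords_pos_gf0 : swords_pos_gf 0 = 0.
Proof. by rewrite /swords_pos_gf big_seq1. Qed.

Lemma swords_pos_gf1 : swords_pos_gf 1 = 1.
Proof. by rewrite /swords_pos_gf big_swordsS big_seq1 big_nat1 /pos_weight /= addr0. Qed.

End InsertionWords.

Section SignedPermutations.

Fixpoint alt_negate (neg : bool) (w : seq int) : seq int :=
  if w is b :: w' then (if neg then - b else b) :: alt_negate (~~ neg) w' else [::].

Fixpoint alt_ascents (a : int) (desc : bool) (w : seq int) : nat :=
  if w is b :: w' then ((if desc then b < a else a < b)%R + alt_ascents b (~~ desc) w')%N
  else 0%N.

Lemma alt_ascents_neg_pairs a desc w :
  alt_ascents a desc w = neg_pairs_from (if desc then - a else a) (alt_negate (~~ desc) w).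
Proof.
elim: w a desc => [|b w IHw] a desc //=.
rewrite IHw negbK; congr (_ + _)%N.
by case: desc; rewrite /= ?opprK ?subr_lt0 // addrC subr_lt0.
Qed.

Lemma count_alt_ascents a desc w :
  count (fun i => if desc (+) odd i then nth 0 (a :: w) i.+1 < nth 0 (a :: w) i
                  else nth 0 (a :: w) i < nth 0 (a :: w) i.+1) (iota 0 (size w))
  = alt_ascents a desc w.
Proof.
elim: w a desc => [|b w IHw] a desc //=.
rewrite addbF; congr (_ + _)%N.
rewrite -(IHw b (~~ desc)) (iotaDl 1 0) count_map; apply: eq_count => i /=.
by rewrite addbN addNb.
Qed.

Lemma size_sp_word n (sg : signed_perm n) : size (sp_word sg) = n.
Proof. by rewrite size_map size_enum_ord. Qed.

Lemma dhatB_alt_ascents n (sg : signed_perm n) : dhatB sg = alt_ascents 0 false (sp_word sg).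
Proof.
rewrite /dhatB -count_alt_ascents /sp_val size_sp_word; apply: eq_count => i /=.
by case: (odd i); rewrite ?andbT ?andbF ?orbF.
Qed.

Lemma Bminus_term n (sg : signed_perm n) :
  (if sp_val sg 1 < 0 then 'X^(dhatB sg) else 0)
  = pos_weight (alt_negate true (sp_word sg)) :> {poly rat}.
Proof.
rewrite dhatB_alt_ascents /sp_val /pos_weight.
case: (sp_word sg) => [|b w] //=.
rewrite oppr_gt0 alt_ascents_neg_pairs /=.
by case: ltrP => // b_neg; rewrite ltNge ltW.
Qed.

Definition signed_word (n : nat) (v : seq int) : bool :=
  [&& size v == n, uniq (map absz v) & all (fun a : int => (0 < absz a <= n)%N) v].

Lemma signed_word_has_max n v :
  signed_word n.+1 v -> has (fun a : int => absz a == n.+1) v.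
Proof.
case/and3P => /eqP size_v uniq_v v_range; apply/negPn/negP => no_max.
suff : (size (map absz v) <= size (iota 1 n))%N by rewrite size_map size_iota size_v ltnn.
apply: uniq_leq_size uniq_v _ => _ /mapP [a a_in ->]; rewrite mem_iota.
have := allP v_range a a_in; have := hasPn no_max a a_in; lia.
Qed.

Lemma insert_nth (T : Type) (x0 : T) (v : seq T) k :
  (k < size v)%N -> v = insert (take k v ++ drop k.+1 v) k (nth x0 v k).
Proof.
move=> k_lt; have size_take : size (take k v) = k by rewrite size_takel // ltnW.
by rewrite /insert take_size_cat // drop_size_cat // -drop_nth // cat_take_drop.
Qed.

Lemma signed_word_swords n v : signed_word n v -> v \in swords n.
Proof.
elim: n v => [|n IHn] v.
  by case/and3P => /eqP /size0nil -> _ _; rewrite inE.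
move=> v_signed; have /and3P [/eqP size_v uniq_v v_range] := v_signed.
have has_max := signed_word_has_max v_signed.
set k := find (fun a : int => absz a == n.+1) v; set e := nth 0 v k.
set w := take k v ++ drop k.+1 v.
have v_eq : v = insert w k e by apply: insert_nth; rewrite -has_find.
have e_max : absz e == n.+1 := nth_find 0 has_max.
have perm_v : perm_eq v (e :: w) by rewrite {1}v_eq perm_insert.
have : uniq (map absz (e :: w)) by rewrite -(perm_uniq (perm_map absz perm_v)).
rewrite map_cons cons_uniq => /andP [e_notin uniq_w].
have ew_range : all (fun a : int => (0 < absz a <= n.+1)%N) (e :: w).
  by rewrite -(perm_all _ perm_v).
have w_signed : signed_word n w.
  apply/and3P; split => //.
    by move: (perm_size perm_v); rewrite size_v => -[->].
  apply/allP => a a_in; have := allP ew_range a; rewrite inE a_in orbT => /(_ isT).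
  have : absz a != absz e by apply: contraNneq e_notin => <-; apply: map_f.
  by move: e_max; lia.
rewrite v_eq swordsS; apply/allpairsP; exists (w, (k, e)); split => //=; first exact: IHn.
apply: allpairs_f; first by rewrite mem_iota leq0n add0n -size_v -has_find.
by rewrite !inE; move: e_max; lia.
Qed.

Lemma map_absz_alt_negate b w : map absz (alt_negate b w) = map absz w.
Proof. by elim: w b => [|a w IHw] b //=; rewrite IHw; case: b; rewrite ?abszN. Qed.

Lemma size_alt_negate b w : size (alt_negate b w) = size w.
Proof. by rewrite -(size_map absz) map_absz_alt_negate size_map. Qed.

Lemma alt_negateK b : involutive (alt_negate b).
Proof. by move=> w; elim: w b => [|a w IHw] b //=; rewrite IHw; case: b; rewrite ?opprK. Qed.

Lemma signed_word_sp_word n (sg : signed_perm n) :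
  signed_word n (alt_negate true (sp_word sg)).
Proof.
have absz_word : map absz (sp_word sg) = [seq (sg.1 i).+1 | i <- enum 'I_n].
  by rewrite -map_comp; apply: eq_map => i /=; case: (sg.2 i); rewrite ?abszN.
apply/and3P; split.
- by rewrite size_alt_negate size_sp_word.
- rewrite map_absz_alt_negate absz_word map_inj_uniq ?enum_uniq //.
  by move=> i j /= [] /val_inj /perm_inj.
- rewrite -(all_map absz (fun k => (0 < k <= n)%N)) map_absz_alt_negate absz_word.
  by apply/allP => _ /mapP [i _ ->]; rewrite /= ltn_ord.
Qed.

Lemma nth_sp_word n (sg : signed_perm n) (i : 'I_n) :
  nth 0 (sp_word sg) i = if sg.2 i then - (sg.1 i).+1%:Z else (sg.1 i).+1%:Z.
Proof. by rewrite /sp_word (nth_map i) ?size_enum_ord // (nth_ord_enum i i). Qed.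

Lemma sp_word_inj n : injective (@sp_word n).
Proof.
move=> [p1 s1] [p2 s2] word_eq.
have entry_eq i : (if s1 i then - (p1 i).+1%:Z else (p1 i).+1%:Z) =
                  (if s2 i then - (p2 i).+1%:Z else (p2 i).+1%:Z).
  by have := congr1 (nth 0 ^~ i) word_eq; rewrite !nth_sp_word.
congr (_, _).
  apply/permP => i; apply/val_inj/succn_inj.
  by have := congr1 absz (entry_eq i); case: (s1 i); case: (s2 i); rewrite ?abszN.
apply/ffunP => i; have := congr1 (fun x : int => x < 0) (entry_eq i).
by case: (s1 i); case: (s2 i) => //=; rewrite oppr_lt0.
Qed.

Lemma size_swords n : size (swords n) = (n`! * 2 ^ n)%N.
Proof.
elim: n => [|n IHn] //.
by rewrite swordsS size_allpairs IHn size_allpairs size_iota factS expnS /=; ring.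
Qed.

Lemma card_signed_perm n : #|signed_perm n| = (n`! * 2 ^ n)%N.
Proof. by rewrite card_prod card_Sn card_ffun card_bool card_ord. Qed.

Lemma perm_swords n :
  perm_eq [seq alt_negate true (sp_word sg) | sg <- enum (signed_perm n)] (swords n).
Proof.
set words := map _ _.
have uniq_words : uniq words.
  rewrite map_inj_uniq ?enum_uniq // => sg sg' /= same_word.
  by apply: sp_word_inj; rewrite -(alt_negateK true (sp_word sg)) same_word alt_negateK.
have sub_words : {subset words <= swords n}.
  by move=> _ /mapP [sg _ ->]; apply/signed_word_swords/signed_word_sp_word.
have size_words : (size (swords n) <= size words)%N.
  by rewrite size_map -cardE card_signed_perm size_swords.
apply: uniq_perm => //; first exact: (leq_size_uniq uniq_words sub_words size_words).
exact: (uniq_min_size uniq_words sub_words size_words).2.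
Qed.

Lemma Bminus_swords_pos_gf n : Bminus n = swords_pos_gf n.
Proof.
rewrite /Bminus big_mkcond /= (eq_bigr _ (fun sg _ => Bminus_term sg)).
rewrite -big_enum -(big_map (fun sg => alt_negate true (sp_word sg)) xpredT pos_weight).
exact/perm_big/perm_swords.
Qed.

End SignedPermutations.

Section ExponentialGeneratingFunctions.

Local Notation t := ('X - 1 : {poly rat}).
Local Notation q := ('X ^+ 2 + 1 : {poly rat}).
Local Notation D := (fps_der q t).

Definition invfact (n : nat) : {poly rat} := (n`!%:R^-1 : rat)%:P.

Lemma invfactS n : n.+1%:R * invfact n.+1 = invfact n.
Proof.
rewrite /invfact -polyC_natr -polyCM factS natrM; congr polyC; field.
by rewrite nat1r !pnatr_eq0 -lt0n fact_gt0.
Qed.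

Lemma fps_der_invfact q' t' G n :
  fps_der q' t' (fun i => invfact i * G i) n =
  invfact n * (G n.+1 - q' * (n%:R * G n - t' * (G n)^`())).
Proof. by rewrite /fps_der /invfact deriv_mulC -/(invfact n) -/(invfact n.+1) -(invfactS n); ring. Qed.

Lemma egfBminusE n : egfBminus n = invfact n * swords_pos_gf n.
Proof.
case: n => [|n]; first by rewrite swords_pos_gf0 mulr0.
by rewrite /egfBminus Bminus_swords_pos_gf mul_polyC.
Qed.

Lemma fps_der_egf_swords n :
  D (fun i => invfact i * swords_gf i) n =
  (1 + 2%:R * 'X - 'X ^+ 2) * (invfact n * swords_gf n) + t ^+ 2 * fps1 n.
Proof.
rewrite fps_der_invfact; case: n => [|n].
  by rewrite swords_gf1 swords_gf0 /invfact fact0 invr1 -polyC1 derivC /fps1 /=; ring.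
by rewrite swords_gfSS /fps1 -natr1 /=; ring.
Qed.

Lemma fps_der_egfBminus n :
  D egfBminus n = invfact n * swords_gf n - 'X * t * egfBminus n.
Proof.
rewrite (eq_fps_der _ _ egfBminusE) fps_der_invfact egfBminusE; case: n => [|n].
  by rewrite swords_pos_gf1 swords_pos_gf0 swords_gf0 deriv0; ring.
by rewrite swords_pos_gfSS -natr1; ring.
Qed.

End ExponentialGeneratingFunctions.

Theorem mainTheorem8 :
  forall n : nat, fps_mul egfBminus den_fps n = num_fps n.
Proof.
apply: (mul_den_of_fps_der_num (Phi := fun i => invfact i * swords_gf i)) => //.
  apply: mul_den_of_fps_der; last exact: fps_der_egf_swords.
  by rewrite swords_gf0 /invfact fact0 invr1 mulr1.
exact: fps_der_egfBminus.
Qed.
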